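(* In Model A below, let $I:=-\inf_{t\in\mathbb{R}}\log\big(\varrho(1-\varrho)e^{t}+\tfrac12+\tfrac12(1-2\varrho+2\varrho^2)e^{-t}\big)$. Then $I>0$ and $$\lim_{d\to\infty,\ d\text{ odd}}\frac1d\log\mathbb{P}\big(\chi(w)=2\text{ under the $c$-segmentation rule with }c=1\big)=-I,$$ while for every sequence $c=c(d)$ with $c\mid d$, $c$ and $d/c$ odd, $c\to\infty$ and $c/d\to0$, $$\lim_{d\to\infty}\frac1d\log\mathbb{P}\big(\chi(w)=2\text{ under the $c$-segmentation rule}\big)=-\tfrac{I}{2}.$$
   Context: Segmentation rule. Let $d,c$ be positive integers with $c\mid d$. For $x\in\mathbb{R}^d$ and $1\le j\le c$ let $x_j\in\mathbb{R}^{d/c}$ denote its $j$-th block $(x_{(j-1)d/c+1},\dots,x_{jd/c})$, so that $x=x_1\circ\cdots\circ x_c$ (concatenation). Given dictionary words $w^1,\dots,w^K\in\mathbb{R}^d$ ($w^k$ representing class $k$) and a test word $w\in\mathbb{R}^d$, for each $j$ let $U_j\in\{1,\dots,K\}$ be an index $k$ minimizing the Euclidean distance $\|w_j-w^k_j\|$ in $\mathbb{R}^{d/c}$, chosen uniformly at random among all minimizers (independently of everything else). The $c$-segmentation rule assigns to $w$ the class $\chi(w)\in\operatorname{argmax}_k\#\{j:U_j=k\}$, chosen uniformly at random among all maximizers. The case $c=1$ is the Euclidean (nearest-neighbour) rule and $c=d$ is coordinate-by-coordinate comparison. Probabilities are over all random objects including tie-breaks. Model A. Fix $\varrho\in(0,\tfrac12)$.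 Let $m_1,m_2$ be independent and uniformly distributed on $\{-1,+1\}^d$. Let $Y^{(0)},Y^{(1)},Y^{(2)}$ be independent random vectors in $\{-1,+1\}^d$, independent of $m_1,m_2$, each with i.i.d. coordinates satisfying $\mathbb{P}(Y_i=1)=1-\varrho$, $\mathbb{P}(Y_i=-1)=\varrho$. Write $x\times y$ for the coordinatewise product. There are $K=2$ classes; the dictionary words are $w^1=Y^{(1)}\times m_1$ (class 1) and $w^2=Y^{(2)}\times m_2$ (class 2), and the test word is $w=Y^{(0)}\times m_1$ (true class 1). *)

From Stdlib Require Import Reals List Arith.
Import ListNotations.
Open Scope R_scope.

Definition sumR {A : Type} (f : A -> R) (l : list A) : R :=
  fold_right (fun a s => f a + s) 0 l.
Definition prodR {A : Type} (f : A -> R) (l : list A) : R :=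
  fold_right (fun a p => f a * p) 1 l.

Fixpoint words {A : Type} (l : list A) (n : nat) : list (list A) :=
  match n with
  | O => [[]]
  | S n' => flat_map (fun a => map (cons a) (words l n')) l
  end.

Definition sign_vectors (d : nat) : list (list R) := words [1; -1] d.

Definition cwprod (x y : list R) : list R :=
  map (fun p => fst p * snd p) (combine x y).

Definition eucl_dist (x y : list R) : R :=
  sqrt (sumR (fun p => (fst p - snd p) ^ 2) (combine x y)).

(** j-th block (1 <= j <= c) of x in R^d, a vector of R^(d/c). *)
Definition block (d c j : nat) (x : list R) : list R :=
  firstn (d / c) (skipn ((j - 1) * (d / c)) x).

(** Dictionary: list of words w^1..w^K (class k is nth (k-1)). *)
Definition dword (dict : list (list R)) (k : nat) : list R := nth (k - 1) dict [].

Definition classes (dict : list (list R)) : list nat := seq 1 (length dict).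

Definition is_nearest (dict : list (list R)) (d c j : nat) (w : list R) (k : nat) : bool :=
  forallb (fun k' =>
     if Rle_dec (eucl_dist (block d c j w) (block d c j (dword dict k)))
                (eucl_dist (block d c j w) (block d c j (dword dict k')))
     then true else false) (classes dict).

Definition nearest_set (dict : list (list R)) (d c j : nat) (w : list R) : list nat :=
  filter (is_nearest dict d c j w) (classes dict).

(** P(U_j = k): uniform among minimizers. *)
Definition prob_U (dict : list (list R)) (d c j : nat) (w : list R) (k : nat) : R :=
  if is_nearest dict d c j w k then / INR (length (nearest_set dict d c j w)) else 0.

Definition votes (u : list nat) (k : nat) : nat := count_occ Nat.eq_dec u k.

Definition is_winner (K : nat) (u : list nat) (k : nat) : bool :=
  forallb (fun k' => Nat.leb (votes u k') (votes u k)) (seq 1 K).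

Definition winners (K : nat) (u : list nat) : list nat := filter (is_winner K u) (seq 1 K).

(** P(chi = k | U = u): uniform among maximizers. *)
Definition prob_chi_given (K : nat) (u : list nat) (k : nat) : R :=
  if is_winner K u k then / INR (length (winners K u)) else 0.

(** P(chi(w) = k) under the c-segmentation rule (tie-breaks independent), for
    k in 1..K; dictionary and test word are fixed. *)
Definition seg_prob (dict : list (list R)) (d c : nat) (w : list R) (k : nat) : R :=
  sumR (fun u =>
          prodR (fun j => prob_U dict d c j w (nth (j - 1) u O)) (seq 1 c)
          * prob_chi_given (length dict) u k)
       (words (classes dict) c).

Definition noise_prob (rho : R) (y : list R) : R :=
  prodR (fun yi => if Req_EM_T yi 1 then 1 - rho else rho) y.

Definition modelA_error (rho : R) (d c : nat) : R :=
  let S := sign_vectors d in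
  sumR (fun m1 => sumR (fun m2 => sumR (fun y0 => sumR (fun y1 => sumR (fun y2 =>
     (1/2) ^ d * (1/2) ^ d * noise_prob rho y0 * noise_prob rho y1 * noise_prob rho y2
     * seg_prob [cwprod y1 m1; cwprod y2 m2] d c (cwprod y0 m1) 2
  ) S) S) S) S) S.

Definition is_inf (E : R -> Prop) (m : R) : Prop :=
  (forall x, E x -> m <= x) /\ (forall b, (forall x, E x -> b <= x) -> b <= m).

From Stdlib Require Import Reals List Lra Lia Setoid Morphisms.
Import ListNotations.
Open Scope R_scope.

(* In Model A the test word and the word of class 1 share the mask m1, so in every coordinate
   ((w_i - w^1_i)^2 - (w_i - w^2_i)^2) / 4 is +1, 0 or -1 with probabilities rho (1 - rho), 1/2 and
   (1 - 2 rho + 2 rho^2) / 2, independently over i.  A block of length b thus votes for class 2 with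
   probability q_b = P(S_b > 0) + P(S_b = 0) / 2 for the corresponding random walk S, and Cramér's
   method (Markov's inequality for the upper bound, exponential tilting and Chebyshev for the lower
   bound) gives q_b = M^b e^(O(sqrt b)), where M = e^(-I) is the minimum of the moment generating
   function.  The c blocks vote independently, so the error of the c-segmentation rule is the
   probability that a Bin(c, q_b) variable wins the majority; for odd c it lies between
   q_b^((c+1)/2) (1 - q_b)^((c-1)/2) and (2 sqrt q_b)^c, i.e. it is M^(d/2) e^(O(c + d / sqrt b)). *)

Lemma sumR_app {A} (f : A -> R) l1 l2 : sumR f (l1 ++ l2) = sumR f l1 + sumR f l2.
Proof. induction l1 as [|a l1 IH]; simpl; [ring|]. unfold sumR in *; simpl; rewrite IH; ring. Qed.

Lemma sumR_map {A B} (f : B -> R) (g : A -> B) l : sumR f (map g l) = sumR (fun x => f (g x)) l.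
Proof. induction l as [|a l IH]; simpl; auto. unfold sumR in *; simpl; rewrite IH; ring. Qed.

Lemma sumR_flat_map {A B} (f : B -> R) (g : A -> list B) l :
  sumR f (flat_map g l) = sumR (fun x => sumR f (g x)) l.
Proof. induction l as [|a l IH]; simpl; auto. rewrite sumR_app, IH. reflexivity. Qed.

Lemma sumR_ext_in {A} (f g : A -> R) l : (forall x, In x l -> f x = g x) -> sumR f l = sumR g l.
Proof.
  induction l as [|a l IH]; intros H; simpl; auto.
  unfold sumR in *; simpl. rewrite H, IH; auto with datatypes.
Qed.

Lemma sumR_ext {A} (f g : A -> R) l : (forall x, f x = g x) -> sumR f l = sumR g l.
Proof. intros; apply sumR_ext_in; auto. Qed.

Lemma sumR_plus {A} (f g : A -> R) l : sumR (fun x => f x + g x) l = sumR f l + sumR g l.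
Proof. induction l as [|a l IH]; simpl; [ring|]. unfold sumR in *; simpl; rewrite IH; ring. Qed.

Lemma sumR_scal {A} (f : A -> R) c l : sumR (fun x => c * f x) l = c * sumR f l.
Proof. induction l as [|a l IH]; simpl; [ring|]. unfold sumR in *; simpl; rewrite IH; ring. Qed.

Lemma sumR_pair {A} (f : A -> R) a b : sumR f [a; b] = f a + f b.
Proof. unfold sumR; simpl. ring. Qed.

Lemma sumR_nonneg {A} (f : A -> R) l : (forall x, In x l -> 0 <= f x) -> 0 <= sumR f l.
Proof.
  induction l as [|a l IH]; simpl; intros H; [lra|].
  assert (0 <= f a) by auto. assert (0 <= sumR f l) by auto. unfold sumR in *; simpl; lra.
Qed.

Lemma prodR_ext_in {A} (f g : A -> R) l : (forall x, In x l -> f x = g x) -> prodR f l = prodR g l.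
Proof.
  induction l as [|a l IH]; intros H; simpl; auto.
  unfold prodR in *; simpl. rewrite H, IH; auto with datatypes.
Qed.

Lemma prodR_map {A B} (f : B -> R) (g : A -> B) l : prodR f (map g l) = prodR (fun x => f (g x)) l.
Proof. induction l as [|a l IH]; simpl; auto. unfold prodR in *; simpl; rewrite IH; ring. Qed.

Lemma prodR_seq_S f c : prodR f (seq 1 (S c)) = f 1%nat * prodR (fun j => f (S j)) (seq 1 c).
Proof.
  change (prodR f (seq 1 (S c))) with (f 1%nat * prodR f (seq 2 c)).
  rewrite <- (seq_shift c 1), prodR_map. reflexivity.
Qed.

Lemma sumR_words_S {A} (f : list A -> R) l n :
  sumR f (words l (S n)) = sumR (fun a => sumR (fun x => f (a :: x)) (words l n)) l.
Proof. simpl words. rewrite sumR_flat_map. apply sumR_ext; intro; apply sumR_map. Qed.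

Lemma words_length {A} (l : list A) n x : In x (words l n) -> length x = n.
Proof.
  revert x; induction n as [|n IH]; simpl; intros x H.
  - destruct H as [<-|[]]; auto.
  - apply in_flat_map in H as [a [_ H]]. apply in_map_iff in H as [y [<- H]].
    simpl; f_equal; auto.
Qed.

Lemma words_nth_in {A} (l : list A) n u i d : In u (words l n) -> (i < n)%nat -> In (nth i u d) l.
Proof.
  revert u i; induction n as [|n IH]; intros u i Hu Hi; [lia|].
  simpl words in Hu. apply in_flat_map in Hu as [a [Ha Hu]].
  apply in_map_iff in Hu as [u' [<- Hu']]. destruct i; simpl; auto. apply IH; auto; lia.
Qed.

Definition coin (p : R) (g : R -> R) : R := (1 - p) * g 1 + p * g (-1).

#[export] Instance coin_Proper p : Proper (pointwise_relation _ eq ==> eq) (coin p).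
Proof. intros f g H. unfold coin. rewrite !H. reflexivity. Qed.

Definition expect_noise (p : R) (n : nat) (f : list R -> R) : R :=
  sumR (fun y => noise_prob p y * f y) (sign_vectors n).

#[export] Instance expect_noise_Proper p n : Proper (pointwise_relation _ eq ==> eq) (expect_noise p n).
Proof. intros f g H. unfold expect_noise. apply sumR_ext; intro; rewrite H; reflexivity. Qed.

Lemma expect_noise_0 p f : expect_noise p 0 f = f [].
Proof. unfold expect_noise, sumR, noise_prob, prodR; simpl. ring. Qed.

Lemma expect_noise_S p n f :
  expect_noise p (S n) f = coin p (fun a => expect_noise p n (fun y => f (a :: y))).
Proof.
  unfold expect_noise, sign_vectors, coin. rewrite sumR_words_S, sumR_pair, <- !sumR_scal.
  unfold noise_prob, prodR; simpl.
  destruct (Req_EM_T 1 1), (Req_EM_T (-1) 1); try lra.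
  f_equal; apply sumR_ext; intro; ring.
Qed.

Lemma expect_noise_lin p n c1 c2 f g :
  expect_noise p n (fun x => c1 * f x + c2 * g x) = c1 * expect_noise p n f + c2 * expect_noise p n g.
Proof. unfold expect_noise. rewrite <- !sumR_scal, <- sumR_plus. apply sumR_ext; intro; ring. Qed.

Lemma expect_noise_coin p n q G :
  expect_noise p n (fun y => coin q (fun a => G y a)) = coin q (fun a => expect_noise p n (fun y => G y a)).
Proof. apply expect_noise_lin. Qed.

Lemma expect_noise_ext_in p n f g :
  (forall y, length y = n -> f y = g y) -> expect_noise p n f = expect_noise p n g.
Proof.
  intros H; unfold expect_noise; apply sumR_ext_in; intros y Hy.
  rewrite H; auto. eapply words_length; eauto.
Qed.

Lemma noise_prob_half y : noise_prob (1/2) y = (1/2) ^ length y.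
Proof.
  induction y as [|a y IH]; [reflexivity|].
  unfold noise_prob, prodR in *; simpl. rewrite IH. destruct (Req_EM_T a 1); lra.
Qed.

Definition expect_modelA (rho : R) (n : nat) (F : list R -> list R -> list R -> list R -> list R -> R) : R :=
  expect_noise (1/2) n (fun m1 => expect_noise (1/2) n (fun m2 =>
    expect_noise rho n (fun y0 => expect_noise rho n (fun y1 => expect_noise rho n (fun y2 =>
      F m1 m2 y0 y1 y2))))).

Definition coin_modelA (rho : R) (G : R -> R -> R -> R -> R -> R) : R :=
  coin (1/2) (fun a1 => coin (1/2) (fun a2 =>
    coin rho (fun b0 => coin rho (fun b1 => coin rho (fun b2 => G a1 a2 b0 b1 b2))))).

Lemma coin_modelA_ext rho G H : (forall a1 a2 b0 b1 b2, G a1 a2 b0 b1 b2 = H a1 a2 b0 b1 b2) ->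
  coin_modelA rho G = coin_modelA rho H.
Proof. intros E; unfold coin_modelA, coin; rewrite !E; reflexivity. Qed.

Lemma expect_modelA_0 rho F : expect_modelA rho 0 F = F [] [] [] [] [].
Proof. unfold expect_modelA. rewrite !expect_noise_0. reflexivity. Qed.

Lemma expect_modelA_S rho n F : expect_modelA rho (S n) F =
  coin_modelA rho (fun a1 a2 b0 b1 b2 => expect_modelA rho n (fun m1 m2 y0 y1 y2 =>
    F (a1 :: m1) (a2 :: m2) (b0 :: y0) (b1 :: y1) (b2 :: y2))).
Proof.
  unfold expect_modelA, coin_modelA.
  repeat (setoid_rewrite expect_noise_S || setoid_rewrite expect_noise_coin). reflexivity.
Qed.

Lemma expect_modelA_lin rho n c1 c2 F G :
  expect_modelA rho n (fun m1 m2 y0 y1 y2 => c1 * F m1 m2 y0 y1 y2 + c2 * G m1 m2 y0 y1 y2)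
  = c1 * expect_modelA rho n F + c2 * expect_modelA rho n G.
Proof. unfold expect_modelA. repeat setoid_rewrite expect_noise_lin. reflexivity. Qed.

Lemma expect_modelA_const rho n k : expect_modelA rho n (fun _ _ _ _ _ => k) = k.
Proof.
  induction n as [|n IH]; [apply expect_modelA_0|].
  rewrite expect_modelA_S. unfold coin_modelA, coin. rewrite !IH. field.
Qed.

Lemma expect_modelA_ext_in rho n F G :
  (forall m1 m2 y0 y1 y2, length m1 = n -> length m2 = n -> length y0 = n ->
     length y1 = n -> length y2 = n -> F m1 m2 y0 y1 y2 = G m1 m2 y0 y1 y2) ->
  expect_modelA rho n F = expect_modelA rho n G.
Proof.
  intros H; unfold expect_modelA.
  do 5 (apply expect_noise_ext_in; intros ? ?). auto.
Qed.

Lemma expect_modelA_app rho b n F : expect_modelA rho (b + n) F =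
  expect_modelA rho b (fun x1 x2 x3 x4 x5 => expect_modelA rho n (fun y1 y2 y3 y4 y5 =>
    F (x1 ++ y1) (x2 ++ y2) (x3 ++ y3) (x4 ++ y4) (x5 ++ y5))).
Proof.
  revert F; induction b as [|b IH]; intros F.
  - rewrite expect_modelA_0. reflexivity.
  - simpl plus. rewrite !expect_modelA_S. apply coin_modelA_ext. intros. apply IH.
Qed.

Lemma modelA_error_expect rho d c : modelA_error rho d c =
  expect_modelA rho d (fun m1 m2 y0 y1 y2 => seg_prob [cwprod y1 m1; cwprod y2 m2] d c (cwprod y0 m1) 2).
Proof.
  unfold modelA_error, expect_modelA, expect_noise.
  apply sumR_ext_in; intros m1 Hm1. rewrite <- sumR_scal.
  apply sumR_ext_in; intros m2 Hm2. rewrite <- !sumR_scal.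
  rewrite !noise_prob_half, (words_length _ _ _ Hm1), (words_length _ _ _ Hm2).
  do 3 (apply sumR_ext; intro; rewrite <- ?sumR_scal). ring.
Qed.

Lemma exp_le_exp x y : x <= y -> exp x <= exp y.
Proof. intros [H|H]; [left; apply exp_increasing | subst]; lra. Qed.

Lemma ln_le_ln x y : 0 < x -> x <= y -> ln x <= ln y.
Proof. intros Hx [H|H]; [left; apply ln_increasing | subst]; lra. Qed.

(* [walk_expect a z b n phi x] is [E phi(x + S_n)] for a walk with i.i.d. steps [+1], [0], [-1]
   of probabilities [a], [z], [b]. *)
Fixpoint walk_expect (a z b : R) (n : nat) (phi : R -> R) (x : R) : R :=
  match n with
  | O => phi x
  | S n => a * walk_expect a z b n phi (x + 1) + z * walk_expect a z b n phi x
           + b * walk_expect a z b n phi (x - 1)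
  end.

Section Walk.
Variables (a z b : R).

Lemma walk_expect_ext n phi psi : (forall y, phi y = psi y) ->
  forall x, walk_expect a z b n phi x = walk_expect a z b n psi x.
Proof. intros H; induction n as [|n IH]; intros x; simpl; auto. rewrite !IH. reflexivity. Qed.

Lemma walk_expect_le n phi psi : 0 <= a -> 0 <= z -> 0 <= b -> (forall y, phi y <= psi y) ->
  forall x, walk_expect a z b n phi x <= walk_expect a z b n psi x.
Proof.
  intros Ha Hz Hb H; induction n as [|n IH]; intros x; simpl; auto.
  pose proof (IH (x + 1)); pose proof (IH x); pose proof (IH (x - 1)).
  apply Rplus_le_compat; [apply Rplus_le_compat|]; apply Rmult_le_compat_l; auto.
Qed.

Lemma walk_expect_lin n c1 c2 phi psi x :
  walk_expect a z b n (fun y => c1 * phi y + c2 * psi y) x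
  = c1 * walk_expect a z b n phi x + c2 * walk_expect a z b n psi x.
Proof. revert x; induction n as [|n IH]; intros x; simpl; auto. rewrite !IH. ring. Qed.

Lemma walk_expect_scal n c phi x : walk_expect a z b n (fun y => c * phi y) x = c * walk_expect a z b n phi x.
Proof.
  rewrite (walk_expect_ext n _ (fun y => c * phi y + 0 * phi y)) by (intros; ring).
  rewrite walk_expect_lin. ring.
Qed.

Lemma walk_expect_1 n x : walk_expect a z b n (fun _ => 1) x = (a + z + b) ^ n.
Proof. revert x; induction n as [|n IH]; intros x; simpl; auto. rewrite !IH. ring. Qed.

Lemma walk_expect_exp t n x :
  walk_expect a z b n (fun y => exp (t * y)) x = exp (t * x) * (a * exp t + z + b * exp (- t)) ^ n.
Proof.
  revert x; induction n as [|n IH]; intros x; simpl; [ring|]. rewrite !IH.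
  replace (t * (x + 1)) with (t * x + t) by ring. replace (t * (x - 1)) with (t * x + - t) by ring.
  rewrite !exp_plus. ring.
Qed.

(* Exponential change of measure (Cramér tilting). *)
Lemma walk_expect_tilt t M n phi x : M <> 0 ->
  walk_expect a z b n phi x = M ^ n * exp (t * x) *
    walk_expect (a * exp t / M) (z / M) (b * exp (- t) / M) n (fun y => exp (- t * y) * phi y) x.
Proof.
  intros HM. revert phi x; induction n as [|n IH]; intros phi x; simpl.
  - replace (- t * x) with (- (t * x)) by ring. rewrite exp_Ropp. field. apply Rgt_not_eq, exp_pos.
  - rewrite !IH.
    replace (t * (x + 1)) with (t * x + t) by ring. replace (t * (x - 1)) with (t * x + - t) by ring.
    rewrite !exp_plus. field. auto.
Qed.

End Walk.

Section SymmetricWalk.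
Variable s : R.
Hypothesis Hs : 0 <= s <= 1/2.

Lemma walk_expect_opp n phi x :
  walk_expect s (1 - 2 * s) s n phi x = walk_expect s (1 - 2 * s) s n (fun y => phi (- y)) (- x).
Proof.
  revert x; induction n as [|n IH]; intros x; simpl.
  - rewrite Ropp_involutive; auto.
  - rewrite !IH. replace (- (x + 1)) with (- x - 1) by ring. replace (- (x - 1)) with (- x + 1) by ring. ring.
Qed.

Lemma walk_expect_sq n x : walk_expect s (1 - 2 * s) s n (fun y => y ^ 2) x = x ^ 2 + 2 * s * INR n.
Proof.
  revert x; induction n as [|n IH]; intros x; simpl walk_expect; [simpl; ring|].
  rewrite !IH, S_INR. ring.
Qed.

Definition nonneg_ind (y : R) : R := if Rle_dec 0 y then 1 else 0.
Definition window_ind (K y : R) : R := if Rle_dec 0 y then (if Rle_dec y K then 1 else 0) else 0.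

(* [P(S_n >= 0) = P(S_n <= 0)] by symmetry, and the two events cover all outcomes. *)
Lemma walk_nonneg_half n : 1/2 <= walk_expect s (1 - 2 * s) s n nonneg_ind 0.
Proof.
  assert (Hz : 0 <= 1 - 2 * s) by lra.
  assert (H1 : 1 <= walk_expect s (1 - 2 * s) s n (fun y => 1 * nonneg_ind y + 1 * nonneg_ind (- y)) 0).
  { replace 1 with (walk_expect s (1 - 2 * s) s n (fun _ => 1) 0) at 1
      by (rewrite walk_expect_1; replace (s + (1 - 2 * s) + s) with 1 by ring; apply pow1).
    apply walk_expect_le; try lra. intros y. unfold nonneg_ind.
    destruct (Rle_dec 0 y), (Rle_dec 0 (- y)); lra. }
  rewrite walk_expect_lin, (walk_expect_opp n (fun y => nonneg_ind (- y))), Ropp_0 in H1.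
  rewrite (walk_expect_ext _ _ _ n (fun y => nonneg_ind (- - y)) nonneg_ind) in H1
    by (intros; rewrite Ropp_involutive; auto).
  lra.
Qed.

(* Chebyshev: [P(0 <= S_n <= K) >= P(S_n >= 0) - E[S_n^2] / K^2]. *)
Lemma walk_window_lower n K : 0 < K -> 1/2 - INR n / K ^ 2 <= walk_expect s (1 - 2 * s) s n (window_ind K) 0.
Proof.
  intros HK. assert (Hz : 0 <= 1 - 2 * s) by lra. assert (HK2 : 0 < K ^ 2) by (apply pow_lt; auto).
  assert (Hq : walk_expect s (1 - 2 * s) s n (fun y => 1 * nonneg_ind y + (- / K ^ 2) * y ^ 2) 0
               <= walk_expect s (1 - 2 * s) s n (window_ind K) 0).
  { apply walk_expect_le; try lra. intros y. unfold nonneg_ind, window_ind.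
    assert (0 <= y ^ 2 / K ^ 2)
      by (apply Rmult_le_pos; [apply pow2_ge_0 | left; apply Rinv_0_lt_compat; auto]).
    destruct (Rle_dec 0 y), (Rle_dec y K); unfold Rdiv in *; try lra.
    assert (1 < y ^ 2 * / K ^ 2); [|lra].
    apply (Rmult_lt_reg_r (K ^ 2)); auto. rewrite Rmult_assoc, Rinv_l by lra. nra. }
  rewrite walk_expect_lin, walk_expect_sq in Hq. pose proof (walk_nonneg_half n).
  assert (2 * s * INR n / K ^ 2 <= INR n / K ^ 2)
    by (apply Rmult_le_compat_r; [left; apply Rinv_0_lt_compat; auto | pose proof (pos_INR n); nra]).
  replace (- / K ^ 2 * (0 ^ 2 + 2 * s * INR n)) with (- (2 * s * INR n / K ^ 2)) in Hq by (unfold Rdiv; ring).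
  lra.
Qed.

End SymmetricWalk.

(* [binom_expect q c psi] is [E psi(c - X, X)] for [X ~ Bin(c, q)]. *)
Fixpoint binom_expect (q : R) (c : nat) (psi : nat -> nat -> R) : R :=
  match c with
  | O => psi O O
  | S c => (1 - q) * binom_expect q c (fun a v => psi (S a) v) + q * binom_expect q c (fun a v => psi a (S v))
  end.

Definition majority_prob (a v : nat) : R := if Nat.ltb a v then 1 else if Nat.eqb a v then 1/2 else 0.

Section Binomial.
Variable q : R.
Hypothesis Hq : 0 <= q <= 1.

Lemma binom_expect_ext c psi phi :
  (forall a v, psi a v = phi a v) -> binom_expect q c psi = binom_expect q c phi.
Proof.
  revert psi phi; induction c as [|c IH]; intros psi phi H; simpl; auto.
  rewrite (IH _ (fun a v => phi (S a) v)), (IH (fun a v => psi a (S v)) (fun a v => phi a (S v))); auto.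
Qed.

Lemma binom_expect_le c psi phi :
  (forall a v, psi a v <= phi a v) -> binom_expect q c psi <= binom_expect q c phi.
Proof.
  revert psi phi; induction c as [|c IH]; intros psi phi H; simpl; auto.
  pose proof (IH (fun a v => psi (S a) v) (fun a v => phi (S a) v) (fun a v => H (S a) v)).
  pose proof (IH (fun a v => psi a (S v)) (fun a v => phi a (S v)) (fun a v => H a (S v))).
  apply Rplus_le_compat; apply Rmult_le_compat_l; lra.
Qed.

Lemma binom_expect_nonneg c psi : (forall a v, 0 <= psi a v) -> 0 <= binom_expect q c psi.
Proof.
  revert psi; induction c as [|c IH]; intros psi H; simpl; auto.
  pose proof (IH (fun a v => psi (S a) v) (fun a v => H (S a) v)).
  pose proof (IH (fun a v => psi a (S v)) (fun a v => H a (S v))). nra.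
Qed.

Lemma binom_expect_geom r s c k :
  binom_expect q c (fun a v => k * r ^ v * s ^ a) = k * ((1 - q) * s + q * r) ^ c.
Proof.
  revert k; induction c as [|c IH]; intros k; cbn [binom_expect]; [simpl; ring|].
  rewrite (binom_expect_ext c (fun a v => k * r ^ v * s ^ S a) (fun a v => (k * s) * r ^ v * s ^ a))
    by (intros; simpl; ring).
  rewrite (binom_expect_ext c (fun a v => k * r ^ S v * s ^ a) (fun a v => (k * r) * r ^ v * s ^ a))
    by (intros; simpl; ring).
  rewrite !IH. simpl. ring.
Qed.

Lemma binom_expect_ge_outcome c m psi : (forall a v, 0 <= psi a v) -> (m <= c)%nat ->
  q ^ m * (1 - q) ^ (c - m) * psi (c - m)%nat m <= binom_expect q c psi.
Proof.
  revert psi m; induction c as [|c IH]; intros psi m Hpos Hm; simpl.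
  - replace m with 0%nat by lia. simpl. lra.
  - pose proof (binom_expect_nonneg c (fun a v => psi (S a) v) (fun a v => Hpos (S a) v)).
    pose proof (binom_expect_nonneg c (fun a v => psi a (S v)) (fun a v => Hpos a (S v))).
    destruct m as [|m].
    + specialize (IH (fun a v => psi (S a) v) 0%nat (fun a v => Hpos (S a) v) ltac:(lia)).
      simpl in *. rewrite Nat.sub_0_r in *. nra.
    + specialize (IH (fun a v => psi a (S v)) m (fun a v => Hpos a (S v)) ltac:(lia)).
      simpl in *. nra.
Qed.

Lemma majority_prob_nonneg a v : 0 <= majority_prob a v.
Proof. unfold majority_prob. destruct (Nat.ltb a v); [lra|]. destruct (Nat.eqb a v); lra. Qed.

(* Chernoff for the majority: [majority_prob a v <= (1 / sqrt q) ^ (v - a)]. *)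
Lemma binom_majority_upper c : 0 < q -> binom_expect q c majority_prob <= (2 * sqrt q) ^ c.
Proof.
  intros Hq0. set (r := / sqrt q).
  assert (Hsq : 0 < sqrt q) by (apply sqrt_lt_R0; lra).
  assert (Hsq1 : sqrt q <= 1) by (rewrite <- sqrt_1; apply sqrt_le_1_alt; lra).
  assert (Hr : 1 <= r) by (unfold r; rewrite <- Rinv_1; apply Rinv_le_contravar; lra).
  apply Rle_trans with (binom_expect q c (fun a v => 1 * r ^ v * (/ r) ^ a)).
  - apply binom_expect_le. intros a v. unfold majority_prob.
    assert (0 < r ^ v) by (apply pow_lt; lra). assert (0 < r ^ a) by (apply pow_lt; lra).
    rewrite pow_inv. assert (0 < / r ^ a) by (apply Rinv_0_lt_compat; lra).
    destruct (Nat.ltb_spec a v).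
    + assert (r ^ a <= r ^ v) by (apply Rle_pow; lia || lra).
      assert (1 <= r ^ v * / r ^ a); [|lra].
      apply (Rmult_le_reg_r (r ^ a)); auto. rewrite Rmult_assoc, Rinv_l by lra. lra.
    + destruct (Nat.eqb_spec a v); [subst; rewrite Rmult_1_l, Rinv_r by lra|]; nra.
  - rewrite binom_expect_geom, Rmult_1_l. apply pow_incr. split.
    + apply Rplus_le_le_0_compat; apply Rmult_le_pos; try lra. left; apply Rinv_0_lt_compat; lra.
    + unfold r. rewrite Rinv_inv.
      assert (E : q * / sqrt q = sqrt q) by (rewrite <- (sqrt_sqrt q) at 1 by lra; field; lra).
      rewrite E. nra.
Qed.

Lemma binom_majority_lower k : q ^ S k * (1 - q) ^ k <= binom_expect q (2 * k + 1) majority_prob.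
Proof.
  pose proof (binom_expect_ge_outcome (2 * k + 1) (S k) majority_prob majority_prob_nonneg ltac:(lia)) as H.
  replace (2 * k + 1 - S k)%nat with k in H by lia.
  replace (majority_prob k (S k)) with 1 in H; [lra|].
  unfold majority_prob. destruct (Nat.ltb_spec k (S k)); [auto | lia].
Qed.

End Binomial.

Lemma majority_rate_algebra X L Lc l2 C K sB :
  L < 0 -> Lc < 0 -> 0 < l2 -> 0 <= C -> 0 <= K -> 1 <= sB ->
  X <= (2 * K + 1) * (l2 + sB * sB * L / 2) ->
  (K + 1) * (sB * sB * L - C * sB) + K * Lc <= X ->
  Rabs (X / (sB * sB * (2 * K + 1)) - L / 2) <= (- L / 2) / (2 * K + 1) + (C + l2 - Lc) / sB.
Proof.
  intros HL HLc Hl2 HC HK HsB Hup Hlo.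
  set (c := 2 * K + 1) in *. assert (Hc : 0 < c) by (unfold c; lra).
  assert (HD : 0 < sB * sB * c) by (apply Rmult_lt_0_compat; nra).
  set (Y := X / (sB * sB * c)).
  assert (HX : X = Y * (sB * sB * c)) by (unfold Y; field; lra). rewrite HX in Hup, Hlo.
  assert (U : Y - L / 2 <= l2 / sB).
  { apply (Rmult_le_reg_r (sB * sB * c)); auto.
    replace (l2 / sB * (sB * sB * c)) with (l2 * sB * c) by (field; lra).
    assert (0 <= (sB - 1) * (l2 * c)) by (apply Rmult_le_pos; nra). unfold c in *. nra. }
  assert (D : - ((- L / 2) / c) - (C - Lc) / sB <= Y - L / 2).
  { apply (Rmult_le_reg_r (sB * sB * c)); auto.
    replace ((- ((- L / 2) / c) - (C - Lc) / sB) * (sB * sB * c)) with (sB * sB * L / 2 - (C - Lc) * sB * c)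
      by (field; lra).
    assert (0 <= K * C * sB) by (apply Rmult_le_pos; [apply Rmult_le_pos|]; lra).
    assert (0 <= (- Lc) * ((2 * K + 1) * sB - K)) by (apply Rmult_le_pos; nra).
    unfold c in *. nra. }
  assert (0 <= (- L / 2) / c) by (apply Rmult_le_pos; [lra | left; apply Rinv_0_lt_compat; lra]).
  assert (0 <= (C - Lc) / sB) by (apply Rmult_le_pos; [lra | left; apply Rinv_0_lt_compat; lra]).
  assert (0 <= l2 / sB) by (apply Rmult_le_pos; [lra | left; apply Rinv_0_lt_compat; lra]).
  replace ((C + l2 - Lc) / sB) with ((C - Lc) / sB + l2 / sB) by (field; lra).
  apply Rabs_le. split; lra.
Qed.

Lemma Un_cv_dominated (v e : nat -> R) l : (forall n, Rabs (v n - l) <= e n) -> Un_cv e 0 -> Un_cv v l.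
Proof.
  intros Hb He eps Heps. destruct (He eps Heps) as [N HN]. exists N. intros n Hn.
  specialize (HN n Hn). unfold Rdist in *. rewrite Rminus_0_r in HN.
  eapply Rle_lt_trans; [apply Hb|]. eapply Rle_lt_trans; [apply RRle_abs | exact HN].
Qed.

Lemma Un_cv_scal (u : nat -> R) k : Un_cv u 0 -> Un_cv (fun n => k * u n) 0.
Proof.
  intros Hu. rewrite <- (Rmult_0_r k). apply CV_mult; auto.
  intros eps Heps. exists O. intros. unfold Rdist. rewrite Rminus_diag, Rabs_R0. lra.
Qed.

Lemma Un_cv_sqrt (u : nat -> R) : Un_cv u 0 -> Un_cv (fun n => sqrt (u n)) 0.
Proof. intros Hu. rewrite <- sqrt_0. apply continuity_seq; auto. apply continuity_pt_sqrt. lra. Qed.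

Lemma Un_cv_inv_INR (c : nat -> nat) :
  (forall M, exists N, forall n, (N <= n)%nat -> (M <= c n)%nat) -> Un_cv (fun n => / INR (c n)) 0.
Proof.
  intros Hc eps Heps. destruct (archimed_cor1 eps Heps) as [M [HM HM0]]. destruct (Hc M) as [N HN].
  exists N. intros n Hn. specialize (HN n Hn).
  assert (0 < INR (c n)) by (apply lt_0_INR; lia).
  unfold Rdist. rewrite Rminus_0_r, Rabs_right by (left; apply Rinv_0_lt_compat; auto).
  apply Rle_lt_trans with (/ INR M); auto.
  apply Rinv_le_contravar; [apply lt_0_INR; lia | apply le_INR; auto].
Qed.

Definition nearest_prob (D1 D2 : R) (k : nat) : R :=
  match k with
  | 1%nat => if Rlt_dec D1 D2 then 1 else if Req_EM_T D1 D2 then 1/2 else 0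
  | 2%nat => if Rlt_dec D2 D1 then 1 else if Req_EM_T D1 D2 then 1/2 else 0
  | _ => 0
  end.

Lemma nearest_prob_sum D1 D2 : nearest_prob D1 D2 1 + nearest_prob D1 D2 2 = 1.
Proof. unfold nearest_prob. destruct (Rlt_dec D1 D2), (Rlt_dec D2 D1), (Req_EM_T D1 D2); lra. Qed.

Lemma prob_U_nearest_prob w1 w2 d c j w k : (k = 1 \/ k = 2)%nat ->
  prob_U [w1; w2] d c j w k =
  nearest_prob (eucl_dist (block d c j w) (block d c j w1)) (eucl_dist (block d c j w) (block d c j w2)) k.
Proof.
  intros Hk. unfold prob_U, nearest_set, is_nearest, classes, dword; simpl.
  set (D1 := eucl_dist (block d c j w) (block d c j w1)).
  set (D2 := eucl_dist (block d c j w) (block d c j w2)).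
  destruct Hk as [-> | ->]; simpl; fold D1 D2; unfold nearest_prob;
  destruct (Rle_dec D1 D1), (Rle_dec D1 D2), (Rle_dec D2 D1), (Rle_dec D2 D2),
    (Rlt_dec D1 D2), (Rlt_dec D2 D1), (Req_EM_T D1 D2); simpl; lra.
Qed.

Lemma prob_chi_given_majority_prob u : prob_chi_given 2 u 2 = majority_prob (votes u 1) (votes u 2).
Proof.
  unfold prob_chi_given, winners, is_winner, majority_prob; simpl. rewrite Nat.leb_refl; simpl.
  destruct (Nat.ltb_spec (votes u 1) (votes u 2)), (Nat.eqb_spec (votes u 1) (votes u 2)),
    (Nat.leb_spec (votes u 1) (votes u 2)), (Nat.leb_spec (votes u 2) (votes u 1));
  simpl; rewrite ?Nat.leb_refl; simpl; lia || lra.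
Qed.

Lemma block_app_1 b c x y : length x = b -> block (b * S c) (S c) 1 (x ++ y) = x.
Proof.
  intros Hx. unfold block. rewrite Nat.div_mul by lia. simpl skipn.
  rewrite firstn_app, Hx, Nat.sub_diag, app_nil_r, <- Hx. apply firstn_all.
Qed.

Lemma block_app_S b c j x y : length x = b -> (1 <= j <= c)%nat ->
  block (b * S c) (S c) (S j) (x ++ y) = block (b * c) c j y.
Proof.
  intros Hx Hj. unfold block. rewrite !Nat.div_mul by lia.
  rewrite skipn_app, skipn_all2 by (rewrite Hx; nia). simpl app.
  do 2 f_equal. rewrite Hx. nia.
Qed.

Lemma cwprod_app a a' m m' : length a = length m -> cwprod (a ++ a') (m ++ m') = cwprod a m ++ cwprod a' m'.
Proof.
  revert m; induction a as [|x a IH]; intros m H; destruct m; simpl in *; try discriminate; auto.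
  unfold cwprod in *; simpl. f_equal. apply IH. lia.
Qed.

Lemma cwprod_length a m : length a = length m -> length (cwprod a m) = length a.
Proof. intros H. unfold cwprod. rewrite length_map, length_combine. lia. Qed.

(* [E psi(#votes for class 1, #votes for class 2)] when [w] is cut into [c] blocks of length [b]. *)
Definition block_votes_expect (b c : nat) (w w1 w2 : list R) (psi : nat -> nat -> R) : R :=
  sumR (fun u => prodR (fun j => prob_U [w1; w2] (b * c) c j w (nth (j - 1) u 0%nat)) (seq 1 c)
                 * psi (votes u 1) (votes u 2))
       (words [1%nat; 2%nat] c).

Lemma prob_U_app_tail b c x x1 x2 y y1 y2 k u :
  length x = b -> length x1 = b -> length x2 = b -> In u (words [1%nat; 2%nat] c) ->
  prodR (fun j => prob_U [x1 ++ y1; x2 ++ y2] (b * S c) (S c) (S j) (x ++ y) (nth (S j - 1) (k :: u) 0%nat))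
    (seq 1 c)
  = prodR (fun j => prob_U [y1; y2] (b * c) c j y (nth (j - 1) u 0%nat)) (seq 1 c).
Proof.
  intros Hx Hx1 Hx2 Hu. apply prodR_ext_in; intros j Hj. apply in_seq in Hj.
  replace (S j - 1)%nat with (S (j - 1)) by lia. simpl nth.
  assert (Hk : In (nth (j - 1) u 0%nat) [1%nat; 2%nat]) by (apply (words_nth_in _ c); auto; lia).
  assert (Hk' : (nth (j - 1) u 0 = 1 \/ nth (j - 1) u 0 = 2)%nat) by (simpl in Hk; intuition).
  rewrite !prob_U_nearest_prob by exact Hk'.
  rewrite !block_app_S by (auto; lia). reflexivity.
Qed.

Lemma block_votes_expect_S b c x x1 x2 y y1 y2 psi : length x = b -> length x1 = b -> length x2 = b ->
  block_votes_expect b (S c) (x ++ y) (x1 ++ y1) (x2 ++ y2) psi =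
      nearest_prob (eucl_dist x x1) (eucl_dist x x2) 1 * block_votes_expect b c y y1 y2 (fun a v => psi (S a) v)
    + nearest_prob (eucl_dist x x1) (eucl_dist x x2) 2 * block_votes_expect b c y y1 y2 (fun a v => psi a (S v)).
Proof.
  intros Hx Hx1 Hx2. unfold block_votes_expect.
  rewrite sumR_words_S, sumR_pair, <- !sumR_scal.
  f_equal; apply sumR_ext_in; intros u Hu;
    rewrite prodR_seq_S, prob_U_app_tail, prob_U_nearest_prob, !block_app_1 by auto;
    cbn [nth Nat.sub]; unfold votes;
    simpl count_occ; ring.
Qed.

Definition block_error (rho : R) (b : nat) : R :=
  expect_modelA rho b (fun m1 m2 y0 y1 y2 =>
    nearest_prob (eucl_dist (cwprod y0 m1) (cwprod y1 m1)) (eucl_dist (cwprod y0 m1) (cwprod y2 m2)) 2).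

Lemma block_correct_prob rho b :
  expect_modelA rho b (fun m1 m2 y0 y1 y2 =>
    nearest_prob (eucl_dist (cwprod y0 m1) (cwprod y1 m1)) (eucl_dist (cwprod y0 m1) (cwprod y2 m2)) 1)
  = 1 - block_error rho b.
Proof.
  transitivity (expect_modelA rho b (fun m1 m2 y0 y1 y2 => 1 * 1 + (-1) *
    nearest_prob (eucl_dist (cwprod y0 m1) (cwprod y1 m1)) (eucl_dist (cwprod y0 m1) (cwprod y2 m2)) 2)).
  - apply expect_modelA_ext_in; intros.
    match goal with |- context [nearest_prob ?D1 ?D2 2] => pose proof (nearest_prob_sum D1 D2) end. lra.
  - rewrite expect_modelA_lin, expect_modelA_const. unfold block_error. ring.
Qed.

(* The blocks use disjoint coordinates, hence their votes are i.i.d. with error [block_error rho b]. *)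
Lemma expect_block_votes rho b c psi :
  expect_modelA rho (b * c) (fun m1 m2 y0 y1 y2 =>
    block_votes_expect b c (cwprod y0 m1) (cwprod y1 m1) (cwprod y2 m2) psi)
  = binom_expect (block_error rho b) c psi.
Proof.
  revert psi; induction c as [|c IH]; intros psi.
  - rewrite Nat.mul_0_r, expect_modelA_0. unfold block_votes_expect, sumR, prodR, votes; simpl. ring.
  - replace (b * S c)%nat with (b + b * c)%nat by lia. rewrite expect_modelA_app. cbn [binom_expect].
    set (V1 := binom_expect _ c (fun a v => psi (S a) v)).
    set (V2 := binom_expect _ c (fun a v => psi a (S v))).
    set (P k x1 x2 x3 x4 x5 := nearest_prob (eucl_dist (cwprod x3 x1) (cwprod x4 x1))
                                             (eucl_dist (cwprod x3 x1) (cwprod x5 x2)) k).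
    transitivity (expect_modelA rho b (fun x1 x2 x3 x4 x5 =>
                    V1 * P 1%nat x1 x2 x3 x4 x5 + V2 * P 2%nat x1 x2 x3 x4 x5)).
    + apply expect_modelA_ext_in. intros x1 x2 x3 x4 x5 L1 L2 L3 L4 L5.
      unfold V1, V2. rewrite <- !IH, !(Rmult_comm (expect_modelA _ _ _)), <- expect_modelA_lin.
      apply expect_modelA_ext_in. intros y1 y2 y3 y4 y5 _ _ _ _ _.
      rewrite !cwprod_app by lia.
      rewrite block_votes_expect_S by (rewrite cwprod_length; lia). unfold P. ring.
    + rewrite expect_modelA_lin. unfold P. rewrite block_correct_prob. fold (block_error rho b). ring.
Qed.

Lemma modelA_error_binom rho b c :
  modelA_error rho (b * c) c = binom_expect (block_error rho b) c majority_prob.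
Proof.
  rewrite modelA_error_expect, <- expect_block_votes. apply expect_modelA_ext_in; intros.
  unfold seg_prob, block_votes_expect. apply sumR_ext; intro u.
  rewrite prob_chi_given_majority_prob. reflexivity.
Qed.

Definition sq_dist (x y : list R) : R := sumR (fun p => (fst p - snd p) ^ 2) (combine x y).

Definition alpha (rho : R) : R := rho * (1 - rho).
Definition beta (rho : R) : R := 1/2 * (1 - 2 * rho + 2 * rho ^ 2).

Lemma sq_dist_cons a x b y : sq_dist (a :: x) (b :: y) = (a - b) ^ 2 + sq_dist x y.
Proof. reflexivity. Qed.

Lemma cwprod_cons a x b y : cwprod (a :: x) (b :: y) = a * b :: cwprod x y.
Proof. reflexivity. Qed.

Definition sq_dist_increment (a1 a2 b0 b1 b2 : R) : R :=
  ((b0 * a1 - b1 * a1) ^ 2 - (b0 * a1 - b2 * a2) ^ 2) / 4.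

(* In every coordinate, the increment is [+1], [0], [-1] with probabilities [alpha], [1/2], [beta]. *)
Lemma expect_modelA_sq_dist rho n phi x :
  expect_modelA rho n (fun m1 m2 y0 y1 y2 =>
     phi (x + (sq_dist (cwprod y0 m1) (cwprod y1 m1) - sq_dist (cwprod y0 m1) (cwprod y2 m2)) / 4))
  = walk_expect (alpha rho) (1/2) (beta rho) n phi x.
Proof.
  revert x; induction n as [|n IH]; intros x.
  - rewrite expect_modelA_0. simpl. f_equal. unfold sq_dist, sumR; simpl. field.
  - rewrite expect_modelA_S.
    transitivity (coin_modelA rho (fun a1 a2 b0 b1 b2 =>
                    walk_expect (alpha rho) (1/2) (beta rho) n phi (x + sq_dist_increment a1 a2 b0 b1 b2))).
    + apply coin_modelA_ext. intros. rewrite <- IH. apply expect_modelA_ext_in; intros.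
      rewrite !cwprod_cons, !sq_dist_cons. f_equal. unfold sq_dist_increment. field.
    + unfold coin_modelA, coin. cbv beta.
      repeat match goal with |- context [sq_dist_increment ?a ?b ?c ?d ?e] =>
        first [ replace (sq_dist_increment a b c d e) with 1 by (unfold sq_dist_increment; field)
              | replace (sq_dist_increment a b c d e) with 0 by (unfold sq_dist_increment; field)
              | replace (sq_dist_increment a b c d e) with (-1) by (unfold sq_dist_increment; field) ] end.
      rewrite Rplus_0_r. replace (x + -1) with (x - 1) by ring.
      simpl walk_expect. unfold alpha, beta. field.
Qed.

Definition heaviside (y : R) : R := if Rlt_dec 0 y then 1 else if Req_EM_T y 0 then 1/2 else 0.

Lemma sq_dist_nonneg x y : 0 <= sq_dist x y.
Proof. apply sumR_nonneg. intros. apply pow2_ge_0. Qed.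

Lemma nearest_prob_sqrt s1 s2 : 0 <= s1 -> 0 <= s2 ->
  nearest_prob (sqrt s1) (sqrt s2) 2 = heaviside ((s1 - s2) / 4).
Proof.
  intros H1 H2. unfold nearest_prob, heaviside.
  destruct (Rlt_dec (sqrt s2) (sqrt s1)) as [Hl|Hl].
  - apply sqrt_lt_0_alt in Hl. destruct (Rlt_dec 0 ((s1 - s2) / 4)); lra.
  - destruct (Req_EM_T (sqrt s1) (sqrt s2)) as [He|He].
    + apply sqrt_inj in He; auto. subst.
      destruct (Rlt_dec 0 ((s2 - s2) / 4)); [lra|]. destruct (Req_EM_T ((s2 - s2) / 4) 0); lra.
    + destruct (Rlt_dec 0 ((s1 - s2) / 4)).
      * exfalso. apply Hl, sqrt_lt_1_alt. lra.
      * destruct (Req_EM_T ((s1 - s2) / 4) 0); auto. exfalso. apply He. f_equal. lra.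
Qed.

Lemma block_error_walk rho n : block_error rho n = walk_expect (alpha rho) (1/2) (beta rho) n heaviside 0.
Proof.
  rewrite <- (expect_modelA_sq_dist rho n heaviside 0). unfold block_error.
  apply expect_modelA_ext_in; intros.
  rewrite Rplus_0_l. unfold eucl_dist.
  fold (sq_dist (cwprod y0 m1) (cwprod y1 m1)) (sq_dist (cwprod y0 m1) (cwprod y2 m2)).
  apply nearest_prob_sqrt; apply sq_dist_nonneg.
Qed.

Section Chernoff.
Variable rho : R.
Hypothesis Hrho : 0 < rho < 1/2.

Let sa := sqrt (alpha rho).
Let sb := sqrt (beta rho).

Definition mgf (t : R) : R := alpha rho * exp t + 1/2 + beta rho * exp (- t).
Definition mgf_min : R := 1/2 + 2 * (sa * sb).
Definition t_opt : R := ln (sb / sa).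

Let alpha_pos : 0 < alpha rho.
Proof. unfold alpha. nra. Qed.

Let alpha_lt_beta : alpha rho < beta rho.
Proof. unfold alpha, beta. nra. Qed.

Let sa_pos : 0 < sa.
Proof. apply sqrt_lt_R0, alpha_pos. Qed.

Let sa_lt_sb : sa < sb.
Proof. apply sqrt_lt_1_alt. lra. Qed.

Let sa_sq : sa * sa = alpha rho.
Proof. apply sqrt_sqrt. lra. Qed.

Let sb_sq : sb * sb = beta rho.
Proof. apply sqrt_sqrt. lra. Qed.

Lemma mgf_min_bounds : 1/2 < mgf_min < 1.
Proof.
  unfold mgf_min. split; [nra|].
  assert ((sa * sb) ^ 2 < 1/16); [|nra].
  replace ((sa * sb) ^ 2) with (alpha rho * beta rho) by (rewrite <- sa_sq, <- sb_sq; ring).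
  unfold alpha, beta. assert (rho * (1 - rho) < 1/4) by nra. nra.
Qed.

Lemma t_opt_nonneg : 0 <= t_opt.
Proof.
  unfold t_opt. rewrite <- ln_1. apply ln_le_ln; [lra|].
  apply (Rmult_le_reg_r (sa)); auto. unfold Rdiv. rewrite Rmult_assoc, Rinv_l; lra.
Qed.

Lemma exp_t_opt : exp t_opt = sb / sa.
Proof. apply exp_ln, Rdiv_lt_0_compat; lra. Qed.

Lemma exp_opp_t_opt : exp (- t_opt) = sa / sb.
Proof. rewrite exp_Ropp, exp_t_opt. field. lra. Qed.

Lemma mgf_t_opt : mgf t_opt = mgf_min.
Proof.
  unfold mgf, mgf_min. rewrite exp_t_opt, exp_opp_t_opt, <- sa_sq, <- sb_sq. field. lra.
Qed.

(* AM-GM: [alpha e^t + beta e^-t >= 2 sqrt(alpha beta)]. *)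
Lemma mgf_ge_min t : mgf_min <= mgf t.
Proof.
  unfold mgf, mgf_min. pose proof (exp_pos t) as Hx. rewrite exp_Ropp, <- sa_sq, <- sb_sq.
  set (X := exp t) in *.
  assert (0 <= (sa * X - sb) ^ 2 * / X)
    by (apply Rmult_le_pos; [apply pow2_ge_0 | left; apply Rinv_0_lt_compat; auto]).
  replace (sa * sa * X + 1/2 + sb * sb * / X)
    with (1/2 + 2 * (sa * sb) + (sa * X - sb) ^ 2 * / X)
    by (field; lra).
  lra.
Qed.

(* Markov's inequality for [exp (t_opt S_n)], using [heaviside y <= exp (t_opt y)]. *)
Lemma block_error_upper n : block_error rho n <= mgf_min ^ n.
Proof.
  rewrite block_error_walk. pose proof t_opt_nonneg.
  apply Rle_trans with (walk_expect (alpha rho) (1/2) (beta rho) n (fun y => exp (t_opt * y)) 0).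
  - apply walk_expect_le; try lra. intros y. unfold heaviside. pose proof (exp_pos (t_opt * y)).
    destruct (Rlt_dec 0 y); [rewrite <- exp_0; apply exp_le_exp; nra|].
    destruct (Req_EM_T y 0); [subst; rewrite Rmult_0_r, exp_0|]; lra.
  - rewrite walk_expect_exp. fold (mgf t_opt). rewrite mgf_t_opt, Rmult_0_r, exp_0. lra.
Qed.

Definition window_width (n : nat) : R := 2 * sqrt (INR n) + 1.

(* Under the tilted law the walk is symmetric, and it lands in [0, window_width n]
   with probability [>= 1/4] by Chebyshev. *)
Lemma block_error_lower n : mgf_min ^ n * exp (- t_opt * window_width n) / 8 <= block_error rho n.
Proof.
  rewrite block_error_walk. pose proof t_opt_nonneg. pose proof mgf_min_bounds.
  set (s := sa * sb / mgf_min).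
  rewrite (walk_expect_tilt _ _ _ t_opt mgf_min) by lra.
  replace (alpha rho * exp t_opt / mgf_min) with s
    by (unfold s; rewrite exp_t_opt, <- sa_sq; field; lra).
  replace (beta rho * exp (- t_opt) / mgf_min) with s
    by (unfold s; rewrite exp_opp_t_opt, <- sb_sq; field; lra).
  replace (1/2 / mgf_min) with (1 - 2 * s) by (unfold s, mgf_min in *; field; lra).
  rewrite Rmult_0_r, exp_0, Rmult_1_r.
  assert (Hs : 0 <= s <= 1/2).
  { unfold s. split; [apply Rmult_le_pos; [nra | left; apply Rinv_0_lt_compat; lra]|].
    apply (Rmult_le_reg_r mgf_min); [lra|]. unfold Rdiv. rewrite Rmult_assoc, Rinv_l by lra.
    unfold mgf_min. lra. }
  set (K := window_width n).
  assert (HK : 0 < K) by (unfold K, window_width; pose proof (sqrt_pos (INR n)); lra).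
  assert (HnK : INR n / K ^ 2 <= 1/4).
  { unfold K, window_width. pose proof (sqrt_pos (INR n)). pose proof (sqrt_sqrt (INR n) (pos_INR n)).
    apply (Rmult_le_reg_r ((2 * sqrt (INR n) + 1) ^ 2)); [apply pow_lt; lra|].
    unfold Rdiv. rewrite Rmult_assoc, Rinv_l by (apply pow_nonzero; lra). nra. }
  pose proof (walk_window_lower s Hs n K HK).
  assert (Hl : walk_expect s (1 - 2 * s) s n (fun y => exp (- t_opt * K) / 2 * window_ind K y) 0
               <= walk_expect s (1 - 2 * s) s n (fun y => exp (- t_opt * y) * heaviside y) 0).
  { apply walk_expect_le; try lra. intros y. unfold window_ind, heaviside.
    pose proof (exp_pos (- t_opt * K)). pose proof (exp_pos (- t_opt * y)).
    assert (0 <= y -> y <= K -> exp (- t_opt * K) <= exp (- t_opt * y)) by (intros; apply exp_le_exp; nra).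
    destruct (Rle_dec 0 y), (Rle_dec y K), (Rlt_dec 0 y), (Req_EM_T y 0); nra. }
  rewrite walk_expect_scal in Hl.
  pose proof (exp_pos (- t_opt * K)). assert (0 < mgf_min ^ n) by (apply pow_lt; lra).
  assert (exp (- t_opt * K) / 8
          <= walk_expect s (1 - 2 * s) s n (fun y => exp (- t_opt * y) * heaviside y) 0) by nra.
  unfold Rdiv in *. nra.
Qed.

Lemma block_error_pos n : 0 < block_error rho n.
Proof.
  eapply Rlt_le_trans; [|apply block_error_lower].
  pose proof mgf_min_bounds. pose proof (exp_pos (- t_opt * window_width n)).
  assert (0 < mgf_min ^ n) by (apply pow_lt; lra).
  apply Rdiv_lt_0_compat; [nra | lra].
Qed.

End Chernoff.

Section Rates.
Variable rho : R.
Hypothesis Hrho : 0 < rho < 1/2.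

Let M := mgf_min rho.
Let HM : 1/2 < M < 1 := mgf_min_bounds rho Hrho.

Let lnM_neg : ln M < 0.
Proof. rewrite <- ln_1. apply ln_increasing; lra. Qed.

Let ln_1_M_neg : ln (1 - M) < 0.
Proof. rewrite <- ln_1. apply ln_increasing; lra. Qed.

Let ln2_pos : 0 < ln 2.
Proof. rewrite <- ln_1. apply ln_increasing; lra. Qed.

(* Chosen so that [exp (- t_opt (2 sqrt b + 1)) / 8 >= exp (- chernoff_slack sqrt b)] for [b >= 1]. *)
Definition chernoff_slack : R := 3 * t_opt rho + ln 8.

Let ln8_pos : 0 < ln 8.
Proof. rewrite <- ln_1. apply ln_increasing; lra. Qed.

Let chernoff_slack_nonneg : 0 <= chernoff_slack.
Proof. unfold chernoff_slack. pose proof (t_opt_nonneg rho Hrho). lra. Qed.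

Lemma ln_block_error_upper b : ln (block_error rho b) <= INR b * ln M.
Proof.
  rewrite <- ln_pow by lra. apply ln_le_ln; [apply block_error_pos | apply block_error_upper]; auto.
Qed.

Lemma ln_block_error_lower b : (1 <= b)%nat ->
  INR b * ln M - chernoff_slack * sqrt (INR b) <= ln (block_error rho b).
Proof.
  intros Hb. pose proof (exp_pos (- t_opt rho * window_width b)). assert (0 < M ^ b) by (apply pow_lt; lra).
  apply Rle_trans with (ln (M ^ b * exp (- t_opt rho * window_width b) / 8)).
  2:{ apply ln_le_ln; [apply Rdiv_lt_0_compat; nra | apply block_error_lower; auto]. }
  unfold Rdiv. rewrite !ln_mult, ln_pow, ln_exp, ln_Rinv by (try apply Rinv_0_lt_compat; nra || lra).
  assert (1 <= sqrt (INR b)) by (rewrite <- sqrt_1; apply sqrt_le_1_alt, (le_INR 1); auto).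
  pose proof (t_opt_nonneg rho Hrho).
  assert (0 <= (t_opt rho + ln 8) * (sqrt (INR b) - 1)) by (apply Rmult_le_pos; lra).
  unfold chernoff_slack, window_width. nra.
Qed.

Lemma euclidean_rate d : (1 <= d)%nat ->
  Rabs (ln (modelA_error rho d 1) / INR d - ln M) <= chernoff_slack * sqrt (/ INR d).
Proof.
  intros Hd. rewrite <- (Nat.mul_1_r d) at 1. rewrite modelA_error_binom. cbn [binom_expect].
  replace (_ + _) with (block_error rho d) by (unfold majority_prob; simpl; ring).
  pose proof (ln_block_error_upper d). pose proof (ln_block_error_lower d Hd).
  assert (HdR : 0 < INR d) by (apply lt_0_INR; lia).
  rewrite sqrt_inv.
  assert (Hs : 0 < sqrt (INR d)) by (apply sqrt_lt_R0; auto).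
  assert (Hss : INR d = sqrt (INR d) * sqrt (INR d)) by (rewrite sqrt_sqrt; lra).
  set (s := sqrt (INR d)) in *. rewrite Hss in *.
  set (X := ln (block_error rho d)) in *.
  replace (X / (s * s) - ln M) with ((X - s * s * ln M) / (s * s)) by (field; lra).
  apply Rabs_le. split.
  - apply (Rmult_le_reg_r (s * s)); [nra|].
    replace ((X - s * s * ln M) / (s * s) * (s * s)) with (X - s * s * ln M) by (field; lra).
    replace (- (chernoff_slack * / s) * (s * s)) with (- (chernoff_slack * s)) by (field; lra). lra.
  - apply Rle_trans with 0; [|apply Rmult_le_pos; [lra | left; apply Rinv_0_lt_compat; lra]].
    apply (Rmult_le_reg_r (s * s)); [nra|].
    replace ((X - s * s * ln M) / (s * s) * (s * s)) with (X - s * s * ln M) by (field; lra). lra.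
Qed.

Definition segmentation_slack : R := chernoff_slack + ln 2 - ln (1 - M).

(* With [q = block_error rho b]: [q^(k+1) (1-q)^k <= error <= (2 sqrt q)^(2k+1)]. *)
Lemma segmentation_rate b k : (1 <= b)%nat ->
  Rabs (ln (modelA_error rho (b * (2 * k + 1)) (2 * k + 1)) / INR (b * (2 * k + 1)) - ln M / 2)
  <= (- ln M / 2) / INR (2 * k + 1) + segmentation_slack * sqrt (/ INR b).
Proof.
  intros Hb. rewrite modelA_error_binom.
  pose proof (block_error_pos rho Hrho b) as Hq0.
  pose proof (block_error_upper rho Hrho b) as Hq1. fold M in Hq1.
  pose proof (ln_block_error_upper b) as Hlnq1. pose proof (ln_block_error_lower b Hb) as Hlnq2.
  set (q := block_error rho b) in *.
  assert (HqM : q <= M).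
  { replace b with (S (b - 1)) in Hq1 by lia. simpl in Hq1.
    assert (M ^ (b - 1) <= 1) by (rewrite <- (pow1 (b - 1)); apply pow_incr; lra).
    assert (0 <= M ^ (b - 1)) by (apply pow_le; lra). nra. }
  set (E := binom_expect q (2 * k + 1) majority_prob).
  assert (Hlow : q ^ S k * (1 - q) ^ k <= E) by (apply binom_majority_lower; lra).
  assert (Hup : E <= (2 * sqrt q) ^ (2 * k + 1)) by (apply binom_majority_upper; lra).
  assert (Hp : 0 < q ^ S k * (1 - q) ^ k) by (apply Rmult_lt_0_compat; apply pow_lt; lra).
  assert (Hsq : 0 < sqrt q) by (apply sqrt_lt_R0; lra).
  assert (HX1 : ln E <= INR (2 * k + 1) * (ln 2 + INR b * ln M / 2)).
  { apply Rle_trans with (ln ((2 * sqrt q) ^ (2 * k + 1))); [apply ln_le_ln; lra|].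
    rewrite ln_pow, ln_mult by lra.
    replace (ln (sqrt q)) with (ln q / 2)
      by (rewrite <- (sqrt_sqrt q) at 1 by lra; rewrite ln_mult by lra; field).
    pose proof (pos_INR (2 * k + 1)). apply Rmult_le_compat_l; lra. }
  assert (HX2 : INR (S k) * (INR b * ln M - chernoff_slack * sqrt (INR b)) + INR k * ln (1 - M) <= ln E).
  { apply Rle_trans with (ln (q ^ S k * (1 - q) ^ k)); [|apply ln_le_ln; auto].
    rewrite ln_mult, !ln_pow by (try apply pow_lt; lra).
    assert (ln (1 - M) <= ln (1 - q)) by (apply ln_le_ln; lra).
    pose proof (pos_INR k). pose proof (pos_INR (S k)).
    apply Rplus_le_compat; apply Rmult_le_compat_l; lra. }
  assert (HsB : 1 <= sqrt (INR b)) by (rewrite <- sqrt_1; apply sqrt_le_1_alt, (le_INR 1); auto).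
  assert (HB : INR b = sqrt (INR b) * sqrt (INR b)) by (rewrite sqrt_sqrt; auto; apply pos_INR).
  assert (Hc : INR (2 * k + 1) = 2 * INR k + 1) by (rewrite plus_INR, mult_INR; simpl; ring).
  rewrite sqrt_inv, mult_INR, Hc. rewrite S_INR in HX2. rewrite Hc in HX1.
  set (sB := sqrt (INR b)) in *. rewrite HB in HX1, HX2 |- *.
  apply majority_rate_algebra; auto using pos_INR.
Qed.

End Rates.

Lemma inf_ln_mgf rho I : 0 < rho < 1/2 ->
  is_inf (fun x => exists t : R,
           x = ln (rho * (1 - rho) * exp t + 1/2 + 1/2 * (1 - 2 * rho + 2 * rho ^ 2) * exp (- t))) (- I) ->
  - I = ln (mgf_min rho).
Proof.
  intros Hrho [Hlow Hgreatest]. pose proof (mgf_min_bounds rho Hrho). apply Rle_antisym.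
  - apply Hlow. exists (t_opt rho). rewrite <- (mgf_t_opt rho Hrho). reflexivity.
  - apply Hgreatest. intros x [t ->]. apply ln_le_ln; [lra|]. apply (mgf_ge_min rho Hrho t).
Qed.

Lemma segmentation_rate_div rho c d : 0 < rho < 1/2 ->
  Nat.divide c d -> Nat.Odd c -> Nat.Odd (d / c) ->
  Rabs (ln (modelA_error rho d c) / INR d - ln (mgf_min rho) / 2)
  <= (- ln (mgf_min rho) / 2) * / INR c + segmentation_slack rho * sqrt (INR c / INR d).
Proof.
  intros Hrho [b ->] [k Hk] [m Hm]. subst c.
  rewrite Nat.div_mul in Hm by lia.
  replace (INR (2 * k + 1) / INR (b * (2 * k + 1))) with (/ INR b)
    by (rewrite mult_INR; field; split; apply not_0_INR; lia).
  apply segmentation_rate; auto. lia.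
Qed.

Theorem proposition1 (rho : R) (Hrho : 0 < rho < 1/2) (I : R)
  (HI : is_inf (fun x => exists t : R,
           x = ln (rho * (1 - rho) * exp t + 1/2
                   + 1/2 * (1 - 2 * rho + 2 * rho ^ 2) * exp (- t))) (- I)) :
  0 < I /\
  Un_cv (fun n => ln (modelA_error rho (2 * n + 1) 1) / INR (2 * n + 1)) (- I) /\
  (forall dseq cseq : nat -> nat,
     (forall n, (dseq n < dseq (S n))%nat) ->
     (forall n, Nat.divide (cseq n) (dseq n)) ->
     (forall n, Nat.Odd (cseq n) /\ Nat.Odd (dseq n / cseq n)) ->
     (forall M, exists N, forall n, (N <= n)%nat -> (M <= cseq n)%nat) ->
     Un_cv (fun n => INR (cseq n) / INR (dseq n)) 0 ->
     Un_cv (fun n => ln (modelA_error rho (dseq n) (cseq n)) / INR (dseq n)) (- I / 2)).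
Proof.
  pose proof (inf_ln_mgf rho I Hrho HI) as HIeq. pose proof (mgf_min_bounds rho Hrho).
  assert (ln (mgf_min rho) < 0) by (rewrite <- ln_1; apply ln_increasing; lra).
  split; [lra|]. rewrite HIeq. split.
  - apply (Un_cv_dominated _ (fun n => chernoff_slack rho * sqrt (/ INR (2 * n + 1)))).
    + intros n. apply euclidean_rate; auto; lia.
    + apply Un_cv_scal, Un_cv_sqrt, Un_cv_inv_INR. intros M. exists M. intros; lia.
  - intros dseq cseq _ Hdiv Hodd Hc Hratio.
    apply (Un_cv_dominated _ (fun n => (- ln (mgf_min rho) / 2) * / INR (cseq n)
                                      + segmentation_slack rho * sqrt (INR (cseq n) / INR (dseq n)))).
    + intros n. apply segmentation_rate_div; try apply Hodd; auto.
    + rewrite <- (Rplus_0_r 0). apply CV_plus.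
      * apply Un_cv_scal, Un_cv_inv_INR, Hc.
      * apply Un_cv_scal, Un_cv_sqrt, Hratio.
Qed.
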